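(* Let $E$ be a real Banach space, $K\subset E$ nonempty closed convex, $Y$ a real Banach space containing a closed, convex, pointed cone $C$ with nonempty interior, $g\in\mathcal F$ satisfying H1–H4, $T:K\to\mathcal P(K)$ satisfying B4, and $f:E\times E\to Y$ satisfying B1–B3. Let $v\in K$, $x\in T(v)$, $\beta>0$ and $e\in\mathrm{int}(C)$. If $$z\in\mathrm{argmin}^C_w\{\beta f(x,y)+g(y)e-\langle y,g'(x)\rangle e: y\in T(v)\},$$ then there exists $c\in C^+\setminus\{0\}$ such that $$\langle y-z,g'(x)-g'(z)\rangle\langle e,c\rangle\le\beta\big[\langle f(x,y),c\rangle-\langle f(x,z),c\rangle\big]\quad\text{for all }y\in T(v).$$
   Context: $C^+=\{z\in Y^*:\langle y,z\rangle\ge0\ \forall y\in C\}$; $y\preceq y'$ iff $y'-y\in C$; $G$ is $C$-convex if $G(tx+(1-t)y)\preceq tG(x)+(1-t)G(y)$ for all $x,y$, $t\in[0,1]$. $\mathcal F$: functions $g:E\to\mathbb R$ strictly convex, lower semicontinuous, Gâteaux differentiable with derivative $g'$. $D_g(x,y)=g(x)-g(y)-\langle x-y,g'(y)\rangle$; $v_g(x,t)=\inf\{D_g(y,x):\|y-x\|=t\}$. H1: level sets of $D_g(x,\cdot)$ bounded; H2: $\inf_{x\in A}v_g(x,t)>0$ for all $t>0$, bounded $A$; H3: $g'$ uniformly continuous on bounded sets; H4: $\lim_{\|x\|\to\infty}(g(x)-\rho\|x-z\|)=\infty$ for all $z$, $\rho>0$. $\Pi^g_D(x)$: unique minimizer of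 $D_g(\cdot,x)$ over nonempty closed convex $D$. B1: $f(x,x)=0$. B2: $f$ uniformly continuous on bounded subsets of $E\times E$. B3: $f(x,\cdot)$ $C$-convex for all $x$. B4: $T$ has nonempty closed convex values, is demiclosed ($x^k\rightharpoonup\bar x$, $d(x^k,T(x^k))\to0\Rightarrow\bar x\in T(\bar x)$), lower semicontinuous at each $\bar x\in K$ ($x^k\to\bar x$, $\bar y\in T(\bar x)\Rightarrow\exists y^k\in T(x^k)$, $y^k\to\bar y$), and quasi $D_g$-nonexpansive ($S(x)=\Pi^g_{T(x)}(x)$ has a fixed point and $D_g(p,S(x))\le D_g(p,x)$ for all fixed points $p$ of $S$ and $x\in K$). $\mathrm{argmin}^C_w\{G(y):y\in Q\}$: set of $a\in Q$ for which no $y\in Q$ satisfies $G(a)-G(y)\in\mathrm{int}(C)$. *)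

From HB Require Import structures.
From mathcomp Require Import all_boot all_order all_algebra.
From mathcomp Require Import all_classical all_reals all_analysis.
Set Implicit Arguments. Unset Strict Implicit. Unset Printing Implicit Defensive.
Import Order.TTheory GRing.Theory Num.Theory.
Import numFieldNormedType.Exports.
Local Open Scope classical_set_scope.
Local Open Scope ring_scope.

Section Defs.
Context {R : realType}.

Definition is_dual {X : normedModType R} (phi : X -> R) : Prop :=
  (forall (a : R) (u v : X), phi (a *: u + v) = a * phi u + phi v)
  /\ continuous phi.

Definition is_bounded {X : normedModType R} (A : set X) : Prop :=
  exists M : R, forall x, A x -> `|x| <= M.

Definition cvx_set {X : normedModType R} (A : set X) : Prop :=
  forall x y (t : R), A x -> A y -> 0 <= t <= 1 -> A (t *: x + (1 - t) *: y).

Definition good_cone {Y : normedModType R} (C : set Y) : Prop :=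
  closed C /\ cvx_set C /\
  (forall (t : R) y, 0 <= t -> C y -> C (t *: y)) /\
  (forall y, C y -> C (- y) -> y = 0) /\
  (exists y, (interior C) y).

Definition dual_cone {Y : normedModType R} (C : set Y) : set (Y -> R) :=
  [set c | is_dual c /\ forall y, C y -> 0 <= c y].

Definition cle {Y : normedModType R} (C : set Y) (y y' : Y) : Prop := C (y' - y).

Definition C_convex {X Y : normedModType R} (C : set Y) (G : X -> Y) : Prop :=
  forall x y (t : R), 0 <= t <= 1 ->
    cle C (G (t *: x + (1 - t) *: y)) (t *: G x + (1 - t) *: G y).

Definition strictly_convex {X : normedModType R} (g : X -> R) : Prop :=
  forall x y (t : R), x != y -> 0 < t < 1 ->
    g (t *: x + (1 - t) *: y) < t * g x + (1 - t) * g y.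

Definition lsc {X : normedModType R} (g : X -> R) : Prop :=
  forall x (eps : R), 0 < eps -> \forall y \near x, g x - eps < g y.

Definition gateaux_derivative {X : normedModType R} (g : X -> R) (g' : X -> X -> R) : Prop :=
  forall x, is_dual (g' x) /\
    forall h, (fun t : R => t^-1 * (g (x + t *: h) - g x)) @ 0^' --> g' x h.

Definition class_F {X : normedModType R} (g : X -> R) (g' : X -> X -> R) : Prop :=
  strictly_convex g /\ lsc g /\ gateaux_derivative g g'.

Definition Dg {X : normedModType R} (g : X -> R) (g' : X -> X -> R) (x y : X) : R :=
  g x - g y - g' y (x - y).

Definition H1 {X : normedModType R} (g : X -> R) (g' : X -> X -> R) : Prop :=
  forall x (r : R), is_bounded [set y | Dg g g' x y <= r].

(* inf_{x in A} v_g(x,t) > 0, with v_g(x,t) = inf{D_g(y,x) : ||y-x|| = t}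
   (infimum of the empty set being +oo) *)
Definition H2 {X : normedModType R} (g : X -> R) (g' : X -> X -> R) : Prop :=
  forall (t : R), 0 < t -> forall A : set X, is_bounded A ->
    exists2 delta : R, 0 < delta &
      forall x y, A x -> `|y - x| = t -> delta <= Dg g g' y x.

(* g' uniformly continuous on bounded sets (w.r.t. the dual norm) *)
Definition H3 {X : normedModType R} (g' : X -> X -> R) : Prop :=
  forall A : set X, is_bounded A -> forall eps : R, 0 < eps ->
    exists2 delta : R, 0 < delta &
      forall x y, A x -> A y -> `|x - y| < delta ->
        forall h, `|g' x h - g' y h| <= eps * `|h|.

Definition H4 {X : normedModType R} (g : X -> R) : Prop :=
  forall (z : X) (rho : R), 0 < rho -> forall M : R,
    exists N : R, forall x, N <= `|x| -> M <= g x - rho * `|x - z|.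

Definition is_bproj {X : normedModType R} (g : X -> R) (g' : X -> X -> R)
  (D : set X) (x p : X) : Prop :=
  D p /\ forall y, D y -> Dg g g' p x <= Dg g g' y x.

Definition dist_set {X : normedModType R} (x : X) (A : set X) : R :=
  inf [set `|x - a| | a in A].

Definition weak_cvg {X : normedModType R} (u : nat -> X) (l : X) : Prop :=
  forall phi : X -> R, is_dual phi -> (fun k => phi (u k)) @ \oo --> phi l.

(* condition B4 for T : K -> P(K), with S(x) = Pi^g_{T(x)}(x) *)
Definition B4 {X : normedModType R} (g : X -> R) (g' : X -> X -> R)
  (K : set X) (T : X -> set X) : Prop :=
  (forall x, K x -> [/\ T x !=set0, closed (T x) & cvx_set (T x)]) /\
  (forall (u : nat -> X) xb, (forall k, K (u k)) -> weak_cvg u xb ->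
     (fun k => dist_set (u k) (T (u k))) @ \oo --> (0 : R) -> T xb xb) /\
  (forall xb, K xb -> forall (u : nat -> X), (forall k, K (u k)) ->
     u @ \oo --> xb -> forall yb, T xb yb ->
     exists2 w : nat -> X, (forall k, T (u k) (w k)) & w @ \oo --> yb) /\
  ((exists p, K p /\ is_bproj g g' (T p) p p) /\
   forall p x s, K p -> is_bproj g g' (T p) p p -> K x -> is_bproj g g' (T x) x s ->
     Dg g g' p s <= Dg g g' p x).

Definition B1 {X Y : normedModType R} (f : X -> X -> Y) : Prop :=
  forall x, f x x = 0.

Definition B2 {X Y : normedModType R} (f : X -> X -> Y) : Prop :=
  forall M : R, forall eps : R, 0 < eps -> exists2 delta : R, 0 < delta &
    forall x y x' y', `|x| <= M -> `|y| <= M -> `|x'| <= M -> `|y'| <= M ->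
      `|x - x'| < delta -> `|y - y'| < delta -> `|f x y - f x' y'| < eps.

Definition B3 {X Y : normedModType R} (C : set Y) (f : X -> X -> Y) : Prop :=
  forall x, C_convex C (f x).

Definition wargmin {X Y : normedModType R} (C : set Y) (G : X -> Y) (Q : set X) : set X :=
  [set a | Q a /\ ~ exists y, Q y /\ (interior C) (G a - G y)].

End Defs.

From HB Require Import structures.
From mathcomp Require Import all_boot all_order all_algebra.
From mathcomp Require Import all_classical all_reals all_analysis.
From mathcomp Require Import ring lra.
Import Order.TTheory GRing.Theory Num.Theory.
Import numFieldNormedType.Exports.
Set Implicit Arguments. Unset Strict Implicit. Unset Printing Implicit Defensive.
Local Open Scope classical_set_scope.
Local Open Scope ring_scope.

(* Let G be the vector objective and M the set of all w with w - G y in int C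
   for some y in T v.  M is open, convex (G is C-convex and T v is convex) and
   misses G z, since z is weakly minimal.  By a geometric Hahn-Banach theorem
   (via Zorn's lemma: a maximal subspace L avoiding the open convex cone
   generated by M - G z is a hyperplane, and for d in that cone the coordinate
   along d in Y = L + R d separates), some continuous linear c satisfies
   c (G z) < c w on M.  Then c lies in C^+, c e > 0 and z minimises c o G on
   T v.  Comparing z with the points z + t (y - z) of T v, using the convexity
   of c o f x, and letting t -> 0+ in the Gateaux quotient of g at z gives the
   inequality. *)

Definition lin_functional (R : ringType) (X : lmodType R) (phi : X -> R) :=
  forall a u w, phi (a *: u + w) = a * phi u + phi w.

Section linear_functional.
Variables (R : realType) (X : normedModType R) (phi : X -> R).
Hypothesis phi_lin : lin_functional phi.

Lemma lin_fun0 : phi 0 = 0.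
Proof.
by apply: (addrI (phi 0)); rewrite addr0 -{1}(mul1r (phi 0)) -phi_lin scaler0 addr0.
Qed.

Lemma lin_funZ a u : phi (a *: u) = a * phi u.
Proof. by rewrite -[a *: u]addr0 phi_lin lin_fun0 addr0. Qed.

Lemma lin_funD u w : phi (u + w) = phi u + phi w.
Proof. by rewrite -[u]scale1r phi_lin mul1r scale1r. Qed.

Lemma lin_funB u w : phi (u - w) = phi u - phi w.
Proof. by rewrite lin_funD -scaleN1r lin_funZ mulN1r. Qed.

Lemma lin_fun_continuous (e : X) (r : R) : 0 < r ->
  (forall u, `|u| < r -> 0 < phi (e + u)) -> continuous phi.
Proof.
move=> r_gt0 pos.
have phie_gt0 : 0 < phi e by have := pos 0; rewrite normr0 addr0; exact.
have bound u : `|u| < r -> `|phi u| < phi e.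
  move=> ur; have := pos u ur; have := pos (- u); rewrite normrN => /(_ ur).
  rewrite !lin_funD -scaleN1r lin_funZ ltr_norml; lra.
move=> x; apply/cvgrPdist_lt => eps eps_gt0; apply/nbhs_normP.
exists (r * eps / phi e) => [|t /= xt]; first by rewrite /= divr_gt0 ?mulr_gt0.
have k_gt0 : 0 < phi e / eps by rewrite divr_gt0.
have /bound : `|(phi e / eps) *: (x - t)| < r.
  by rewrite normrZ gtr0_norm // -ltr_pdivlMl // invf_div (mulrC (eps / _)) mulrA.
by rewrite lin_funZ normrM gtr0_norm // lin_funB -ltr_pdivlMl // invf_div divfK ?gt_eqF.
Qed.

End linear_functional.

Lemma exists_pos_mul_lt (R : realFieldType) (a r : R) : 0 <= a -> 0 < r ->
  exists2 d : R, 0 < d & d * a < r.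
Proof.
move=> a_ge0 r_gt0; exists (r / (a + 1)); first by rewrite divr_gt0 // ltr_wpDl.
by rewrite mulrAC ltr_pdivrMr ?ltr_wpDl // ltr_pM2l // ltrDl.
Qed.

Definition subspace (R : ringType) (Y : lmodType R) (L : set Y) :=
  forall a u w, L u -> L w -> L (a *: u + w).

Section open_cone_separation.
Variables (R : realType) (Y : normedModType R) (D : set Y) (e : Y).
Hypotheses (D_open : open D) (De : D e)
  (D_add : forall u w, D u -> D w -> D (u + w))
  (D_scale : forall s u, 0 < s -> D u -> D (s *: u))
  (D_not0 : ~ D 0).

Lemma open_cone_ball u : D u -> exists2 r : R, 0 < r & forall w, `|u - w| < r -> D w.
Proof. by move: D_open; rewrite openE => /[apply] /nbhs_normP. Qed.

Lemma open_cone_shift w : D w -> exists2 d : R, 0 < d & D (w - d *: e).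
Proof.
move=> /open_cone_ball [r r_gt0 Bw].
have [d d_gt0 dr] := exists_pos_mul_lt (normr_ge0 e) r_gt0.
by exists d => //; apply: Bw; rewrite opprB addrC subrK normrZ gtr0_norm.
Qed.

Lemma open_cone_absorbing u : exists2 s : R, 0 < s & D (s *: e + u).
Proof.
have [r r_gt0 Be] := open_cone_ball De.
have [d d_gt0 dr] := exists_pos_mul_lt (normr_ge0 u) r_gt0.
exists d^-1; first by rewrite invr_gt0.
have -> : d^-1 *: e + u = d^-1 *: (e + d *: u).
  by rewrite scalerDr scalerA mulVf ?gt_eqF // scale1r.
apply: D_scale; first by rewrite invr_gt0.
by apply: Be; rewrite opprD addNKr normrN normrZ gtr0_norm.
Qed.

Lemma maximal_subspace_avoiding : exists L : set Y,
  [/\ subspace L, L 0, (forall u, L u -> ~ D u) &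
      forall y, ~ L y -> exists l s, L l /\ D (l + s *: y)].
Proof.
pose P (L : set Y) := subspace L /\ forall u, L u -> ~ D u.
have [L [[Lsub LD] Lmax]] : exists L, P L /\ forall B, L `<` B -> ~ P B.
  apply: Zorn_bigcup => F FP Ftot; split.
  - move=> a u w [X FX Xu] [X' FX' X'w].
    have [XX'|X'X] := Ftot X X' FX FX'.
      by exists X' => //; apply: (FP X' FX').1 => //; exact: XX'.
    by exists X => //; apply: (FP X FX).1 => //; exact: X'X.
  - by move=> u [X FX Xu]; exact: (FP X FX).2 u Xu.
have L0 : L 0.
  have [[u Lu]|nL] := pselect (L !=set0).
    by have := Lsub (-1) u u Lu Lu; rewrite scaleN1r addNr.
  apply: contrapT => _; apply: (Lmax [set 0]); last first.
    by split=> [a _ _ -> ->|_ ->//]; rewrite scaler0 addr0.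
  by split=> [u Lu|/(_ 0 erefl) L0]; case: nL; [exists u | exists 0].
exists L; split => // y Ly.
pose B := [set w | exists l s, L l /\ w = l + s *: y].
have LB : L `<` B.
  split; first by move=> u Lu; exists u, 0; rewrite scale0r addr0.
  by move=> BL; apply: Ly; apply: BL; exists 0, 1; rewrite scale1r add0r.
have Bsub : subspace B.
  move=> a _ _ [l1 [s1 [Ll1 ->]]] [l2 [s2 [Ll2 ->]]].
  exists (a *: l1 + l2), (a * s1 + s2); split; first exact: Lsub.
  by rewrite scalerDr scalerA scalerDl addrACA.
apply: contrapT => nBD; apply: (Lmax B LB); split => // _ [l [s [Ll ->]]] Du.
by apply: nBD; exists l, s.
Qed.

Section maximal_subspace.
Variable L : set Y.
Hypotheses (L_sub : subspace L) (L0 : L 0) (L_avoid : forall u, L u -> ~ D u)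
  (L_max : forall y, ~ L y -> exists l s, L l /\ D (l + s *: y)).

Lemma subspaceZ a u : L u -> L (a *: u).
Proof. by move=> Lu; rewrite -[_ *: u]addr0; exact: L_sub L0. Qed.

Lemma subspaceB u w : L u -> L w -> L (u - w).
Proof. by move=> Lu Lw; rewrite -scaleN1r addrC; exact: L_sub. Qed.

Lemma avoid_trichotomy y :
  [\/ L y, exists2 l, L l & D (y - l) | exists2 l, L l & D (l - y)].
Proof.
have [|/L_max [l [s [Ll Dls]]]] := pselect (L y); first by constructor 1.
have [s_lt0|s_gt0|s0] := ltrgtP s 0.
- constructor 3; exists ((- s)^-1 *: l); first exact: subspaceZ.
  have -> : (- s)^-1 *: l - y = (- s)^-1 *: (l + s *: y).
    by rewrite scalerDr scalerA invrN mulNr mulVf ?lt_eqF // scaleN1r.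
  by apply: D_scale => //; rewrite invr_gt0 oppr_gt0.
- constructor 2; exists ((- s^-1) *: l); first exact: subspaceZ.
  have -> : y - (- s^-1) *: l = s^-1 *: (l + s *: y).
    by rewrite scalerDr scalerA mulVf ?gt_eqF // scale1r scaleNr opprK addrC.
  by apply: D_scale => //; rewrite invr_gt0.
- by move: Dls; rewrite s0 scale0r addr0 => /L_avoid.
Qed.

Lemma avoid_between w l1 l2 : L l1 -> L l2 -> D (w - l1) -> ~ D (l2 - w).
Proof.
move=> Ll1 Ll2 D1 D2; have := D_add D2 D1.
by rewrite addrA subrK; apply: L_avoid; exact: subspaceB.
Qed.

Lemma hyperplane_coord y : exists t, L (y - t *: e).
Proof.
pose A := [set t : R | exists2 l, L l & D (y - t *: e - l)].
pose B := [set t : R | exists2 l, L l & D (l - (y - t *: e))].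
have A_lt_B a b : A a -> B b -> a < b.
  move=> [l1 Ll1 D1] [l2 Ll2 D2]; rewrite ltNge; apply/negP => ba.
  apply: (avoid_between Ll1 Ll2 _ D2); move: ba; rewrite le_eqVlt => /predU1P[->//|ba].
  have -> : y - b *: e - l1 = (y - a *: e - l1) + (a - b) *: e.
    by rewrite scalerBl [RHS]addrAC [in RHS]addrA subrK.
  by apply: D_add => //; apply: D_scale => //; rewrite subr_gt0.
have [s1 s1_gt0 Ds1] := open_cone_absorbing y.
have A_s1 : A (- s1) by exists 0; rewrite ?L0 // scaleNr opprK subr0 addrC.
have [s2 s2_gt0 Ds2] := open_cone_absorbing (- y).
have B_s2 : B s2 by exists 0; rewrite ?L0 // sub0r opprB.
have A_ub : ubound A s2 by move=> a /A_lt_B /(_ B_s2) /ltW.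
have A_sup : has_sup A by split; [exists (- s1) | exists s2].
exists (sup A).
(* By openness of [D], a point of [A] or of [B] can be moved a little to the
   right or to the left respectively, so [sup A] lies in neither set. *)
have [//|[l Ll /open_cone_shift [d d_gt0 Dd]]|[l Ll /open_cone_shift [d d_gt0 Dd]]] :=
  avoid_trichotomy (y - sup A *: e).
- have /(sup_upper_bound A_sup) : A (sup A + d).
    by exists l => //; rewrite scalerDl opprD addrA (addrAC _ (- (d *: e))).
  lra.
- have : sup A <= sup A - d.
    apply: ge_sup; first by exists (- s1).
    move=> a Aa; apply/ltW/(A_lt_B _ _ Aa); exists l => //.
    by rewrite scalerBl !opprB (addrAC _ (- (d *: e))) !addrA in Dd *.
  lra.
Qed.

Lemma hyperplane_coord_unique y t t' :
  L (y - t *: e) -> L (y - t' *: e) -> t = t'.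
Proof.
move=> Lt Lt'; have := subspaceB Lt' Lt.
have -> : y - t' *: e - (y - t *: e) = (t - t') *: e.
  by rewrite scalerBl opprB [LHS]addrC addrA subrK.
have [//|tt' /(subspaceZ (t - t')^-1)] := eqVneq t t'.
by rewrite scalerA mulVf ?subr_eq0 // scale1r => /L_avoid.
Qed.

Lemma subspace_separation : exists c, is_dual c /\ forall d, D d -> 0 < c d.
Proof.
have [c Lc] := choice hyperplane_coord.
have c_lin : lin_functional c.
  move=> a u w; apply: (hyperplane_coord_unique (Lc _)).
  have -> : a *: u + w - (a * c u + c w) *: e = a *: (u - c u *: e) + (w - c w *: e).
    by rewrite scalerBr scalerA scalerDl opprD [RHS]addrACA.
  by apply: L_sub; exact: Lc.
have c_pos d : D d -> 0 < c d.
  move=> Dd; rewrite ltNge; apply/negP => cd_le0; apply: (L_avoid (Lc d)).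
  have [->|cd_neq0] := eqVneq (c d) 0; first by rewrite scale0r subr0.
  rewrite -scaleNr; apply: D_add => //; apply: D_scale => //.
  by rewrite oppr_gt0 lt_neqAle cd_neq0.
have [r r_gt0 Be] := open_cone_ball De.
exists c; split => //; split => //.
apply: (lin_fun_continuous (e := e) c_lin r_gt0) => u ur; apply/c_pos/Be.
by rewrite opprD addNKr normrN.
Qed.

End maximal_subspace.

Lemma open_cone_separation : exists c, is_dual c /\ forall d, D d -> 0 < c d.
Proof.
have [L [Lsub L0 LD Lmax]] := maximal_subspace_avoiding.
exact: subspace_separation Lmax.
Qed.

End open_cone_separation.

Lemma scale_convex_comb (R : ringType) (V : lmodType R) (t : R) (u : V) :
  t *: u + (1 - t) *: u = u.
Proof. by rewrite -scalerDl addrC subrK scale1r. Qed.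

Lemma scale_convex_combD (R : ringType) (V : lmodType R) (a b : R) (u1 u2 v1 v2 : V) :
  a *: (u1 + v1) + b *: (u2 + v2) = (a *: u1 + b *: u2) + (a *: v1 + b *: v2).
Proof. by rewrite !scalerDr addrACA. Qed.

Lemma open_convex_separation (R : realType) (Y : normedModType R) (M : set Y) (p : Y) :
  open M -> cvx_set M -> M !=set0 -> ~ M p ->
  exists c, is_dual c /\ forall w, M w -> c p < c w.
Proof.
move=> M_open M_cvx [m Mm] M_not_p.
pose D := [set w | exists2 s : R, 0 < s & M (s^-1 *: w + p)].
have MD w : M w -> D (w - p) by exists 1; rewrite ?invr1 ?scale1r ?subrK.
have [c [c_dual c_pos]] : exists c, is_dual c /\ forall d, D d -> 0 < c d.
  apply: (@open_cone_separation _ _ D (m - p)).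
  - rewrite openE => w [s s_gt0 Msw].
    move: M_open; rewrite openE => /(_ _ Msw) /nbhs_normP [r r_gt0 Br].
    apply/nbhs_normP; exists (s * r) => [|w' ww']; first by rewrite /= mulr_gt0.
    exists s => //; apply: Br; move: ww'; rewrite /ball_ /= opprD addrACA subrr addr0.
    by rewrite -scalerBr normrZ gtr0_norm ?invr_gt0 // ltr_pdivrMl.
  - exact: MD.
  - move=> u w [s1 s1_gt0 Mu] [s2 s2_gt0 Mw].
    have s_gt0 : 0 < s1 + s2 by rewrite addr_gt0.
    exists (s1 + s2) => //; set t := s1 / (s1 + s2).
    have -> : (s1 + s2)^-1 *: (u + w) + p =
        t *: (s1^-1 *: u + p) + (1 - t) *: (s2^-1 *: w + p).
      rewrite scale_convex_combD scale_convex_comb !scalerA scalerDr.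
      by congr (_ *: _ + _ *: _ + _); rewrite /t; field; rewrite ?gt_eqF.
    apply: M_cvx => //; apply/andP; split; first by rewrite divr_ge0 ?ltW.
    by rewrite ler_pdivrMr // mul1r lerDl ltW.
  - move=> s u s_gt0 [s1 s1_gt0 Mu]; exists (s * s1); first exact: mulr_gt0.
    by rewrite scalerA invfM mulrAC mulVf ?gt_eqF // mul1r.
  - by move=> [s _]; rewrite scaler0 add0r.
exists c; split => // w /MD /c_pos.
by rewrite (lin_funB c_dual.1) subr_gt0.
Qed.

Section good_cone.
Variables (R : realType) (Y : normedModType R) (C : set Y).
Hypothesis C_cone : good_cone C.

Lemma good_coneZ s y : 0 <= s -> C y -> C (s *: y).
Proof. by case: C_cone => _ [_ [C_scale _]]; exact: C_scale. Qed.

Lemma good_coneD y y' : C y -> C y' -> C (y + y').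
Proof.
case: C_cone => _ [C_cvx _] Cy Cy'.
have half01 : 0 <= (2^-1 : R) <= 1 by apply/andP; split; lra.
have /(good_coneZ (ler0n _ 2)) := C_cvx _ _ _ Cy Cy' half01.
have -> : 1 - 2^-1 = 2^-1 :> R by field.
by rewrite -scalerDr scalerA mulfV ?pnatr_eq0 // scale1r.
Qed.

Lemma interior_good_coneD y y' : C° y -> C y' -> C° (y + y').
Proof.
move=> /nbhs_normP [r r_gt0 Br] Cy'; apply/nbhs_normP; exists r => // w yw.
rewrite -(subrK y' w); apply: good_coneD => //; apply: Br.
by move: yw; rewrite /ball_ /= opprB addrA.
Qed.

Lemma interior_good_coneZ s y : 0 < s -> C° y -> C° (s *: y).
Proof.
move=> s_gt0 /nbhs_normP [r r_gt0 Br]; apply/nbhs_normP.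
have s_neq0 : s != 0 by rewrite gt_eqF.
exists (s * r) => [|w]; first by rewrite /= mulr_gt0.
rewrite /ball_ /= -[w in C w](scalerKV s_neq0) => yw.
apply: good_coneZ (ltW s_gt0) _; apply: Br; move: yw.
by rewrite -[in s *: y - w](scalerKV s_neq0 w) -scalerBr normrZ gtr0_norm // ltr_pM2l.
Qed.

Lemma interior_good_cone_convex : cvx_set C°.
Proof.
move=> y y' t Iy Iy' /andP [t_ge0 t_le1].
have [->|t_neq0] := eqVneq t 0; first by rewrite scale0r add0r subr0 scale1r.
apply: interior_good_coneD.
  by apply: (interior_good_coneZ _ Iy); rewrite lt_neqAle eq_sym t_neq0.
by apply: good_coneZ; [rewrite subr_ge0 | exact: interior_subset].
Qed.

End good_cone.

Definition convex_fun (R : realType) (X : normedModType R) (g : X -> R) :=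
  forall x y (t : R), 0 <= t <= 1 ->
    g (t *: x + (1 - t) *: y) <= t * g x + (1 - t) * g y.

Lemma strictly_convex_convex (R : realType) (X : normedModType R) (g : X -> R) :
  strictly_convex g -> convex_fun g.
Proof.
move=> g_sc x y t /andP [t_ge0 t_le1].
have [<-|xy] := eqVneq x y.
  by rewrite scale_convex_comb -mulrDl addrC subrK mul1r.
have [->|t_neq0] := eqVneq t 0; first by rewrite scale0r add0r subr0 scale1r; lra.
have [->|t_neq1] := eqVneq t 1; first by rewrite subrr scale0r addr0 scale1r; lra.
by apply/ltW/g_sc; rewrite // lt_neqAle eq_sym t_neq0 t_ge0 lt_neqAle t_neq1.
Qed.

Lemma convex_funB_lin (R : realType) (X : normedModType R) (g l : X -> R) :
  convex_fun g -> lin_functional l -> convex_fun (fun y => g y - l y).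
Proof.
move=> g_cvx l_lin x y t t01; have := g_cvx x y t t01.
rewrite (lin_funD l_lin) !(lin_funZ l_lin); lra.
Qed.

Section C_convex.
Variables (R : realType) (X Y : normedModType R) (C : set Y).
Hypothesis C_cone : good_cone C.

Lemma C_convexD (F1 F2 : X -> Y) :
  C_convex C F1 -> C_convex C F2 -> C_convex C (fun y => F1 y + F2 y).
Proof.
move=> F1_cvx F2_cvx x y t t01; rewrite /cle scale_convex_combD opprD addrACA.
by apply: (good_coneD C_cone); [exact: F1_cvx | exact: F2_cvx].
Qed.

Lemma C_convexZ (b : R) (F : X -> Y) :
  0 <= b -> C_convex C F -> C_convex C (fun y => b *: F y).
Proof.
move=> b_ge0 F_cvx x y t t01; rewrite /cle !scalerA (mulrC t) (mulrC (1 - t)).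
rewrite -!scalerA -scalerDr -scalerBr; apply: (good_coneZ C_cone b_ge0).
exact: F_cvx.
Qed.

Lemma C_convex_scaled_dir (phi : X -> R) (e : Y) :
  C e -> convex_fun phi -> C_convex C (fun y => phi y *: e).
Proof.
move=> Ce phi_cvx x y t t01; rewrite /cle !scalerA -scalerDl -scalerBl.
by apply: (good_coneZ C_cone) => //; rewrite subr_ge0; exact: phi_cvx.
Qed.

Lemma C_convex_dual_comp (F : X -> Y) (c : Y -> R) :
  C_convex C F -> dual_cone C c -> convex_fun (fun y => c (F y)).
Proof.
move=> F_cvx [[c_lin _] c_pos] x y t t01; have := c_pos _ (F_cvx x y t t01).
by rewrite (lin_funB c_lin) (lin_funD c_lin) !(lin_funZ c_lin) subr_ge0.
Qed.

End C_convex.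

Lemma shift_pos_ge0 (R : realFieldType) (a b : R) :
  0 < a -> (forall s, 0 < s -> 0 < s * a + b) -> 0 <= b.
Proof.
move=> a_gt0 pos; apply/ler_addgt0Pr => eps eps_gt0.
by have := pos _ (divr_gt0 eps_gt0 a_gt0); rewrite divfK ?gt_eqF // addrC => /ltW.
Qed.

Lemma wargmin_scalarization (R : realType) (X Y : normedModType R) (C : set Y)
    (G : X -> Y) (Q : set X) (z : X) :
  good_cone C -> cvx_set Q -> C_convex C G -> wargmin C G Q z ->
  exists c, [/\ dual_cone C c, forall d, C° d -> 0 < c d &
                forall y, Q y -> c (G z) <= c (G y)].
Proof.
move=> C_cone Q_cvx G_cvx [Qz z_min].
have [e Ie] : exists e, C° e by case: C_cone => _ [_ [_ []]].
pose M := [set w | exists2 y, Q y & C° (w - G y)].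
have MG y d : Q y -> C° d -> M (d + G y) by move=> Qy Id; exists y; rewrite ?addrK.
have [c [c_dual c_sep]] : exists c, is_dual c /\ forall w, M w -> c (G z) < c w.
  apply: open_convex_separation.
  - rewrite openE => w [y Qy]; move: (open_interior C); rewrite openE => /[apply].
    move=> /nbhs_normP [r r_gt0 Br]; apply/nbhs_normP; exists r => // w' ww'.
    by exists y => //; apply: Br; move: ww'; rewrite /ball_ /= opprB addrA subrK.
  - move=> w1 w2 t [y1 Qy1 I1] [y2 Qy2 I2] t01.
    exists (t *: y1 + (1 - t) *: y2); first exact: Q_cvx.
    have -> : t *: w1 + (1 - t) *: w2 - G (t *: y1 + (1 - t) *: y2) =
        (t *: (w1 - G y1) + (1 - t) *: (w2 - G y2)) +
        (t *: G y1 + (1 - t) *: G y2 - G (t *: y1 + (1 - t) *: y2)).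
      by rewrite scale_convex_combD !scalerN -opprD addrA subrK.
    apply: (interior_good_coneD C_cone); last exact: G_cvx.
    exact: interior_good_cone_convex.
  - by exists (e + G z); exact: MG.
  - by move=> [y Qy Iy]; apply: z_min; exists y.
have [c_lin _] := c_dual.
have c_int d : C° d -> 0 < c d.
  by move=> Id; have := c_sep _ (MG _ _ Qz Id); rewrite (lin_funD c_lin) ltrDr.
have ce_gt0 := c_int e Ie.
exists c; split => //.
- split => // d Cd; apply: (shift_pos_ge0 ce_gt0) => s s_gt0.
  have := c_int _ (interior_good_coneD C_cone (interior_good_coneZ C_cone s_gt0 Ie) Cd).
  by rewrite (lin_funD c_lin) (lin_funZ c_lin).
- move=> y Qy; rewrite -subr_ge0; apply: (shift_pos_ge0 ce_gt0) => s s_gt0.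
  have := c_sep _ (MG _ _ Qy (interior_good_coneZ C_cone s_gt0 Ie)).
  rewrite (lin_funD c_lin) (lin_funZ c_lin); lra.
Qed.

Section gateaux.
Variables (R : realType) (E : normedModType R) (g : E -> R) (g' : E -> E -> R).
Hypothesis g_der : gateaux_derivative g g'.

Lemma gateaux_derivative_ge (z h : E) (a : R) :
  (forall t, 0 < t < 1 -> a * t <= g (z + t *: h) - g z) -> a <= g' z h.
Proof.
move=> slope_ge; apply: (cvgr_to_ge (cvg_dnbhs_at_right ((g_der z).2 h))).
near=> t; rewrite ler_pdivlMl; last by near: t; exact: nbhs_right_gt.
rewrite mulrC; apply: slope_ge; apply/andP; split.
  by near: t; exact: nbhs_right_gt.
by near: t; exact: nbhs_right_lt.
Unshelve. all: by end_near.
Qed.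

Lemma gateaux_optimality (F : E -> R) (Q : set E) (x z : E) (beta kappa : R) :
  cvx_set Q -> 0 <= beta -> 0 < kappa -> convex_fun F -> Q z ->
  (forall y, Q y -> beta * F z + g z * kappa - g' x z * kappa <=
                    beta * F y + g y * kappa - g' x y * kappa) ->
  forall y, Q y -> (g' x (y - z) - g' z (y - z)) * kappa <= beta * (F y - F z).
Proof.
move=> Q_cvx beta_ge0 kappa_gt0 F_cvx Qz z_min y Qy; set h := y - z.
have gx_lin : lin_functional (g' x) := (g_der x).1.1.
suff : (g' x h * kappa - beta * (F y - F z)) / kappa <= g' z h.
  by rewrite ler_pdivrMr //; lra.
apply: gateaux_derivative_ge => t /andP [t_gt0 t_lt1].
rewrite mulrAC ler_pdivrMr // mulrC.
have t01 : 0 <= t <= 1 by apply/andP; split; lra.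
have yt : t *: y + (1 - t) *: z = z + t *: h.
  by rewrite scalerBl scale1r addrCA -scalerBr.
have := z_min _ (Q_cvx _ _ _ Qy Qz t01); have := F_cvx y z t t01.
rewrite yt (lin_funD gx_lin) (lin_funZ gx_lin) => /(ler_wpM2l beta_ge0); lra.
Qed.

End gateaux.

Theorem proposition3p3 (R : realType)
  (E : completeNormedModType R) (Y : completeNormedModType R)
  (K : set E) (C : set Y) (g : E -> R) (g' : E -> E -> R)
  (T : E -> set E) (f : E -> E -> Y)
  (hK : [/\ K !=set0, closed K & cvx_set K])
  (hC : good_cone C)
  (hg : class_F g g') (h1 : H1 g g') (h2 : H2 g g') (h3 : H3 g') (h4 : H4 g)
  (hTK : forall x, K x -> T x `<=` K)
  (hB4 : B4 g g' K T)
  (hB1 : B1 f) (hB2 : B2 f) (hB3 : B3 C f)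
  (v x : E) (beta : R) (e : Y) (z : E)
  (hv : K v) (hx : T v x) (hbeta : 0 < beta) (he : (interior C) e)
  (hz : wargmin C (fun y => beta *: f x y + g y *: e - g' x y *: e) (T v) z) :
  exists c : Y -> R, dual_cone C c /\ (exists w, c w != 0) /\
    forall y, T v y ->
      (g' x (y - z) - g' z (y - z)) * c e <= beta * (c (f x y) - c (f x z)).
Proof.
have [_ _ Tv_cvx] := hB4.1 v hv.
have [g_sc [_ g_der]] := hg.
have G_cvx : C_convex C (fun y => beta *: f x y + g y *: e - g' x y *: e).
  have -> : (fun y => beta *: f x y + g y *: e - g' x y *: e) =
      (fun y => beta *: f x y + (g y - g' x y) *: e).
    by apply/funext => y; rewrite scalerBl addrA.
  apply: (C_convexD hC); first exact: (C_convexZ hC (ltW hbeta) (hB3 x)).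
  apply: (C_convex_scaled_dir hC (interior_subset he)).
  exact: convex_funB_lin (strictly_convex_convex g_sc) (g_der x).1.1.
have [c [c_dual c_int c_min]] := wargmin_scalarization hC Tv_cvx G_cvx hz.
have [[c_lin _] _] := c_dual.
have ce_gt0 := c_int e he.
exists c; split => //; split; first by exists e; rewrite gt_eqF.
apply: (gateaux_optimality g_der Tv_cvx (ltW hbeta) ce_gt0 _ hz.1).
- exact: C_convex_dual_comp (hB3 x) c_dual.
- by move=> y /c_min; rewrite !(lin_funB c_lin, lin_funD c_lin, lin_funZ c_lin).
Qed.
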